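(* Let $\mathcal E$ be an environment and $t_0,t_1$ closed normal forms with $t_0\approx_{\mathcal E}t_1$. Then for every context $C$ such that $C[t_0]$ and $C[t_1]$ are closed, $C[t_0]\approx_{\mathcal E}C[t_1]$.
   Context: Terms of $\lambda_S$: $t ::= x \mid \lambda x.t \mid t\,t \mid \mathcal{S}k.t \mid \langle t\rangle$ (shift binds $k$; $\langle\cdot\rangle$ reset), up to $\alpha$-conversion. Values $v::=\lambda x.t$. Pure contexts $E ::= \Box \mid v\,E \mid E\,t$; evaluation contexts $F ::= \Box \mid v\,F \mid F\,t \mid \langle F\rangle$; contexts $C ::= \Box \mid \lambda x.C \mid t\,C \mid C\,t \mid \mathcal{S}k.C \mid \langle C\rangle$. Reduction: $F[(\lambda x.t)v]\to F[t\{v/x\}]$; $F[\langle E[\mathcal Sk.t]\rangle]\to F[\langle t\{\lambda x.\langle E[x]\rangle/k\}\rangle]$ ($x\notin\mathrm{fv}(E)$); $F[\langle v\rangle]\to F[v]$; $\to^*$ reflexive-transitive closure. Stuck term: not a value and irreducible; normal form: value or stuck term. Closures: for $R$ a relation on closed terms, $\widetilde R$ is the smallest relation containing $R$, all $(x,x)$, closed under all term constructors, restricted to closed terms; $\widehat R$ is the smallest relation on closed evaluation contexts with $\Box\widehat R\Box$, $v_0F_0\widehat Rv_1F_1$ if $F_0\widehat RF_1,v_0\widetilde Rv_1$; $F_0t_0\widehat RF_1t_1$ if $F_0\widehat RF_1,t_0\widetilde Rt_1$; $\langle F_0\rangle\widehat R\langle F_1\rangle$ if $F_0\widehat RF_1$.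 Environmental bisimilarity: an environment $\mathcal E$ is a relation on closed normal forms relating values only with values and stuck terms only with stuck terms; an environmental relation $\mathcal X$ is a set of environments and triples $(\mathcal E,t_0,t_1)$ with $t_0,t_1$ closed, written $t_0\mathcal X_{\mathcal E}t_1$. $\mathcal X$ is an environmental bisimulation if (1) whenever $t_0\mathcal X_{\mathcal E}t_1$: (a) $t_0\to t_0'$ implies $t_1\to^*t_1'$ with $t_0'\mathcal X_{\mathcal E}t_1'$; (b) if $t_0$ is a value $v_0$ then $t_1\to^*v_1$, a value, with $\mathcal E\cup\{(v_0,v_1)\}\in\mathcal X$; (c) if $t_0$ is stuck then $t_1\to^*t_1'$ stuck with $\mathcal E\cup\{(t_0,t_1')\}\in\mathcal X$; (d) symmetric conditions for $t_1$; (2) whenever $\mathcal E\in\mathcal X$: (a) $(\lambda x.t_0)\mathcal E(\lambda x.t_1)$ and $v_0\widetilde{\mathcal E}v_1$ imply $t_0\{v_0/x\}\mathcal X_{\mathcal E}t_1\{v_1/x\}$; (b) $E_0[\mathcal Sk.t_0]\mathcal EE_1[\mathcal Sk.t_1]$ and pure $E_0'\widehat{\mathcal E}E_1'$ imply $\langle t_0\{\lambda x.\langle E_0'[E_0[x]]\rangle/k\}\rangle\mathcal X_{\mathcal E}\langle t_1\{\lambda x.\langle E_1'[E_1[x]]\rangle/k\}\rangle$, $x$ fresh. $\approx$ is the largest environmental bisimulation; $t_0\approx_{\mathcal E}t_1$ means $(\mathcal E,t_0,t_1)\in\approx$. *)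

From Stdlib Require Import Arith.

(* Terms: Shift t binds k as index 0 in t; Lam t binds x as index 0. *)
Inductive term : Type :=
| Var : nat -> term
| Lam : term -> term
| App : term -> term -> term
| Shift : term -> term
| Reset : term -> term.

Definition is_value (t : term) : Prop :=
  match t with Lam _ => True | _ => False end.

Fixpoint closed_at (k : nat) (t : term) : Prop :=
  match t with
  | Var n => n < k
  | Lam b => closed_at (S k) b
  | App a b => closed_at k a /\ closed_at k b
  | Shift b => closed_at (S k) b
  | Reset b => closed_at k b
  end.

Definition closed (t : term) : Prop := closed_at 0 t.

Fixpoint lift (c : nat) (t : term) : term :=
  match t with
  | Var n => if n <? c then Var n else Var (S n)
  | Lam b => Lam (lift (S c) b)
  | App a b => App (lift c a) (lift c b)
  | Shift b => Shift (lift (S c) b)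
  | Reset b => Reset (lift c b)
  end.

Fixpoint liftn (n : nat) (t : term) : term :=
  match n with 0 => t | S m => lift 0 (liftn m t) end.

Fixpoint subst_at (k : nat) (t : term) (v : term) : term :=
  match t with
  | Var n => if n =? k then liftn k v
             else if k <? n then Var (pred n) else Var n
  | Lam b => Lam (subst_at (S k) b v)
  | App a b => App (subst_at k a v) (subst_at k b v)
  | Shift b => Shift (subst_at (S k) b v)
  | Reset b => Reset (subst_at k b v)
  end.

(* t{v/x} where x is the variable bound by the enclosing binder of t *)
Definition subst (t v : term) : term := subst_at 0 t v.

(* Evaluation-context shapes: F ::= [] | v F | F t | <F> *)
Inductive ectx : Type :=
| Hole : ectx
| AppR : term -> ectx -> ectx
| AppL : ectx -> term -> ectx
| RstC : ectx -> ectx.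

Fixpoint plugE (F : ectx) (t : term) : term :=
  match F with
  | Hole => t
  | AppR v F' => App v (plugE F' t)
  | AppL F' u => App (plugE F' t) u
  | RstC F' => Reset (plugE F' t)
  end.

Fixpoint liftE (c : nat) (F : ectx) : ectx :=
  match F with
  | Hole => Hole
  | AppR v F' => AppR (lift c v) (liftE c F')
  | AppL F' u => AppL (liftE c F') (lift c u)
  | RstC F' => RstC (liftE c F')
  end.

Fixpoint evalctx (F : ectx) : Prop :=
  match F with
  | Hole => True
  | AppR v F' => is_value v /\ evalctx F'
  | AppL F' _ => evalctx F'
  | RstC F' => evalctx F'
  end.

Fixpoint pure (E : ectx) : Prop :=
  match E with
  | Hole => True
  | AppR v E' => is_value v /\ pure E'
  | AppL E' _ => pure E'
  | RstC _ => False
  end.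

(* the continuation  \x. < E[x] >  with x fresh *)
Definition capture (E : ectx) : term := Lam (Reset (plugE (liftE 0 E) (Var 0))).

Inductive step : term -> term -> Prop :=
| step_beta : forall F t v, evalctx F -> is_value v ->
    step (plugE F (App (Lam t) v)) (plugE F (subst t v))
| step_shift : forall F E t, evalctx F -> pure E ->
    step (plugE F (Reset (plugE E (Shift t))))
         (plugE F (Reset (subst t (capture E))))
| step_reset : forall F v, evalctx F -> is_value v ->
    step (plugE F (Reset v)) (plugE F v).

Inductive steps : term -> term -> Prop :=
| steps_refl : forall t, steps t t
| steps_step : forall t u w, step t u -> steps u w -> steps t w.

Definition stuck (t : term) : Prop := ~ is_value t /\ forall u, ~ step t u.
Definition normal_form (t : term) : Prop := is_value t \/ stuck t.

(* General contexts C ::= [] | \x.C | t C | C t | Sk.C | <C>  (plugging may capture) *)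
Inductive ctx : Type :=
| CHole : ctx
| CLam : ctx -> ctx
| CAppR : term -> ctx -> ctx
| CAppL : ctx -> term -> ctx
| CShift : ctx -> ctx
| CReset : ctx -> ctx.

Fixpoint plugC (C : ctx) (t : term) : term :=
  match C with
  | CHole => t
  | CLam C' => Lam (plugC C' t)
  | CAppR u C' => App u (plugC C' t)
  | CAppL C' u => App (plugC C' t) u
  | CShift C' => Shift (plugC C' t)
  | CReset C' => Reset (plugC C' t)
  end.

Definition rel := term -> term -> Prop.

Inductive tilde_open (R : rel) : rel :=
| to_R : forall a b, R a b -> tilde_open R a b
| to_var : forall n, tilde_open R (Var n) (Var n)
| to_lam : forall a b, tilde_open R a b -> tilde_open R (Lam a) (Lam b)
| to_app : forall a a' b b', tilde_open R a b -> tilde_open R a' b' ->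
    tilde_open R (App a a') (App b b')
| to_shift : forall a b, tilde_open R a b -> tilde_open R (Shift a) (Shift b)
| to_reset : forall a b, tilde_open R a b -> tilde_open R (Reset a) (Reset b).

Definition tilde (R : rel) : rel :=
  fun a b => tilde_open R a b /\ closed a /\ closed b.

Inductive hat (R : rel) : ectx -> ectx -> Prop :=
| hat_hole : hat R Hole Hole
| hat_appR : forall v0 v1 F0 F1, is_value v0 -> is_value v1 ->
    hat R F0 F1 -> tilde R v0 v1 -> hat R (AppR v0 F0) (AppR v1 F1)
| hat_appL : forall F0 F1 t0 t1,
    hat R F0 F1 -> tilde R t0 t1 -> hat R (AppL F0 t0) (AppL F1 t1)
| hat_rst : forall F0 F1, hat R F0 F1 -> hat R (RstC F0) (RstC F1).

Definition environment (E : rel) : Prop :=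
  forall a b, E a b -> closed a /\ closed b /\
    ((is_value a /\ is_value b) \/ (stuck a /\ stuck b)).

Definition add_pair (E : rel) (a b : term) : rel :=
  fun x y => E x y \/ (x = a /\ y = b).

Record envrel : Type := {
  X_env : rel -> Prop;
  X_tri : rel -> term -> term -> Prop }.

Definition well_formed_envrel (X : envrel) : Prop :=
  (forall E, X_env X E -> environment E) /\
  (forall E t0 t1, X_tri X E t0 t1 -> environment E /\ closed t0 /\ closed t1).

Definition env_bisim (X : envrel) : Prop :=
  well_formed_envrel X /\
  (forall E t0 t1, X_tri X E t0 t1 ->
     (forall t0', step t0 t0' -> exists t1', steps t1 t1' /\ X_tri X E t0' t1') /\
     (is_value t0 -> exists v1, steps t1 v1 /\ is_value v1 /\
                                X_env X (add_pair E t0 v1)) /\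
     (stuck t0 -> exists t1', steps t1 t1' /\ stuck t1' /\
                              X_env X (add_pair E t0 t1')) /\
     (forall t1', step t1 t1' -> exists t0', steps t0 t0' /\ X_tri X E t0' t1') /\
     (is_value t1 -> exists v0, steps t0 v0 /\ is_value v0 /\
                                X_env X (add_pair E v0 t1)) /\
     (stuck t1 -> exists t0', steps t0 t0' /\ stuck t0' /\
                              X_env X (add_pair E t0' t1))) /\
  (forall E, X_env X E ->
     (forall b0 b1 v0 v1, E (Lam b0) (Lam b1) -> is_value v0 -> is_value v1 ->
        tilde E v0 v1 -> X_tri X E (subst b0 v0) (subst b1 v1)) /\
     (forall E0 E1 s0 s1 E0' E1',
        pure E0 -> pure E1 ->
        E (plugE E0 (Shift s0)) (plugE E1 (Shift s1)) ->
        pure E0' -> pure E1' -> hat E E0' E1' ->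
        X_tri X E
          (Reset (subst s0 (Lam (Reset (plugE (liftE 0 E0') (plugE (liftE 0 E0) (Var 0)))))))
          (Reset (subst s1 (Lam (Reset (plugE (liftE 0 E1') (plugE (liftE 0 E1) (Var 0))))))))).

Definition bisimilar (E : rel) (t0 t1 : term) : Prop :=
  exists X, env_bisim X /\ X_tri X E t0 t1.

(* An up-to-context argument.  Since t0 and t1 are bisimilar normal forms, a
   bisimulation X contains an environment E2 extending E with the pair (t0, t1), so that
   C[t0] and C[t1] are related by the congruence closure of E2.  Relating hat-related
   evaluation contexts filled with triples of X, together with the congruence closures of the
   environments of X, gives again an environmental bisimulation: a reduction of terms related
   by the congruence closure either happens structurally on both sides, or consumes a pair of
   the environment (a lambda is applied, or a stuck term has its shift captured), and then
   clause (2) of X relates the continuations; when the terms in the holes reach normal forms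
   they join the environment.  Determinism of reduction makes the contexts transparent. *)

From Stdlib Require Import Arith Lia FunctionalExtensionality PropExtensionality.

Fixpoint compE (A B : ectx) : ectx :=
  match A with
  | Hole => B
  | AppR v A' => AppR v (compE A' B)
  | AppL A' u => AppL (compE A' B) u
  | RstC A' => RstC (compE A' B)
  end.

Lemma plugE_comp : forall A B t, plugE (compE A B) t = plugE A (plugE B t).
Proof. induction A; intros; simpl; try rewrite IHA; auto. Qed.

Lemma liftE_comp : forall A c B, liftE c (compE A B) = compE (liftE c A) (liftE c B).
Proof. induction A; intros; simpl; try rewrite IHA; auto. Qed.

Lemma compE_assoc : forall A B C, compE A (compE B C) = compE (compE A B) C.
Proof. induction A; intros; simpl; try rewrite IHA; auto. Qed.

Lemma evalctx_comp : forall A B, evalctx A -> evalctx B -> evalctx (compE A B).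
Proof. induction A; simpl; intuition. Qed.

Lemma pure_comp : forall A B, pure A -> pure B -> pure (compE A B).
Proof. induction A; simpl; intuition. Qed.

Lemma capture_comp : forall A B,
  capture (compE A B) = Lam (Reset (plugE (liftE 0 A) (plugE (liftE 0 B) (Var 0)))).
Proof. intros; unfold capture; rewrite liftE_comp, plugE_comp; auto. Qed.

(** * Closed terms and substitution *)

Fixpoint closedE (k : nat) (F : ectx) : Prop :=
  match F with
  | Hole => True
  | AppR v F' => closed_at k v /\ closedE k F'
  | AppL F' u => closedE k F' /\ closed_at k u
  | RstC F' => closedE k F'
  end.

Lemma closed_plugE : forall F k t, closed_at k (plugE F t) <-> closedE k F /\ closed_at k t.
Proof. induction F; intros; simpl; try rewrite IHF; intuition. Qed.

Lemma closed_at_mono : forall t k m, closed_at k t -> k <= m -> closed_at m t.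
Proof.
  induction t; intros k m H Hle; simpl in *; try lia;
    try (eapply IHt; [eassumption | lia]).
  destruct H; split; eauto.
Qed.

Lemma closedE_mono : forall F k m, closedE k F -> k <= m -> closedE m F.
Proof. induction F; intros k m H Hle; simpl in *; intuition eauto using closed_at_mono. Qed.

Lemma lift_closed : forall t c, closed_at c t -> lift c t = t.
Proof.
  induction t; intros c H; simpl in *; try (rewrite IHt; auto).
  - destruct (Nat.ltb_spec n c); auto; lia.
  - destruct H; rewrite IHt1, IHt2; auto.
Qed.

Lemma liftn_closed : forall n t, closed t -> liftn n t = t.
Proof. induction n; intros t H; simpl; auto. rewrite IHn; auto using lift_closed. Qed.

Lemma liftE_closed : forall F c, closedE c F -> liftE c F = F.
Proof.
  induction F; intros c H; simpl in *; auto;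
    [destruct H; rewrite lift_closed, IHF | destruct H; rewrite lift_closed, IHF | rewrite IHF];
    auto.
Qed.

Lemma subst_at_closed : forall t k v, closed_at k t -> subst_at k t v = t.
Proof.
  induction t; intros k v H; simpl in *; try (rewrite IHt; auto).
  - destruct (Nat.eqb_spec n k); [lia|]. destruct (Nat.ltb_spec k n); auto; lia.
  - destruct H; rewrite IHt1, IHt2; auto.
Qed.

Lemma closed_subst_at : forall t k v,
  closed_at (S k) t -> closed v -> closed_at k (subst_at k t v).
Proof.
  induction t; intros k v H Hv; simpl in *; auto.
  - destruct (Nat.eqb_spec n k).
    + rewrite liftn_closed; auto. eapply closed_at_mono; eauto; lia.
    + destruct (Nat.ltb_spec k n); simpl; lia.
  - destruct H; split; auto.
Qed.

Lemma closed_subst : forall t v, closed_at 1 t -> closed v -> closed (subst t v).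
Proof. intros; apply closed_subst_at; auto. Qed.

Lemma closed_capture : forall E, closedE 0 E -> closed (capture E).
Proof.
  intros E HE. unfold capture, closed; simpl. rewrite liftE_closed by exact HE.
  apply closed_plugE; split; [eapply closedE_mono; eauto | simpl; lia].
Qed.
(** * Reduction *)

Inductive contract : term -> term -> Prop :=
| contract_beta : forall t v, is_value v -> contract (App (Lam t) v) (subst t v)
| contract_shift : forall E t, pure E ->
    contract (Reset (plugE E (Shift t))) (Reset (subst t (capture E)))
| contract_reset : forall v, is_value v -> contract (Reset v) v.

Lemma step_contract : forall F r r', evalctx F -> contract r r' ->
  step (plugE F r) (plugE F r').
Proof. intros F r r' HF Hr; destruct Hr; constructor; auto. Qed.

Lemma step_inv : forall t u, step t u ->
  exists F r r', evalctx F /\ contract r r' /\ t = plugE F r /\ u = plugE F r'.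
Proof. intros t u H; destruct H; do 3 eexists; repeat split; eauto using contract. Qed.

Lemma step_ctx : forall t u F, step t u -> evalctx F -> step (plugE F t) (plugE F u).
Proof.
  intros t u G H HG. destruct (step_inv _ _ H) as [F [r [r' [HF [Hr [-> ->]]]]]].
  rewrite <- !plugE_comp. apply step_contract; auto using evalctx_comp.
Qed.

Lemma steps_trans : forall a b c, steps a b -> steps b c -> steps a c.
Proof. intros a b c H; induction H; intros; eauto using steps_step. Qed.

Lemma steps_ctx : forall t u F, steps t u -> evalctx F -> steps (plugE F t) (plugE F u).
Proof. intros t u F H; induction H; intros; eauto using steps, step_ctx. Qed.

Lemma plugE_value : forall F t, is_value (plugE F t) -> F = Hole /\ is_value t.
Proof. destruct F; simpl; intros; auto; contradiction. Qed.

Lemma pure_shift_not_value : forall E s, ~ is_value (plugE E (Shift s)).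
Proof. intros E s H; destruct (plugE_value _ _ H) as [_ []]. Qed.

Lemma contract_not_value : forall F r r', contract r r' -> ~ is_value (plugE F r).
Proof. intros F r r' Hr H; destruct (plugE_value _ _ H) as [_ V]; destruct Hr; auto. Qed.

Lemma value_no_step : forall v u, is_value v -> ~ step v u.
Proof.
  intros v u V H. destruct (step_inv _ _ H) as [F [r [r' [_ [Hr [-> _]]]]]].
  exact (contract_not_value _ _ _ Hr V).
Qed.

Lemma normal_no_step : forall t u, normal_form t -> ~ step t u.
Proof. intros t u [V | [_ S]]; [apply value_no_step; auto | apply S]. Qed.

Lemma normal_steps : forall t u, normal_form t -> steps t u -> u = t.
Proof.
  intros t u N H; destruct H as [|t u w S _]; auto.
  exfalso; exact (normal_no_step _ _ N S).
Qed.

Lemma plug_contract_neq_pure_shift : forall E F r r' s, pure E -> evalctx F ->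
  contract r r' -> plugE F r <> plugE E (Shift s).
Proof.
  induction E as [| v E IH | E IH u |]; intros F r r' s PE EF Hr Heq; simpl in *;
    [| destruct PE as [Vv PE] | | contradiction];
    destruct F as [| w F | F w | F]; simpl in *; try discriminate.
  - subst; inversion Hr.
  - subst; inversion Hr; subst. eapply pure_shift_not_value; eauto.
  - injection Heq; intros; subst. eapply IH; eauto. tauto.
  - injection Heq; intros; subst. eapply contract_not_value; eauto.
  - subst; inversion Hr; subst. eapply pure_shift_not_value with (E := E).
    match goal with H : Lam _ = _ |- _ => rewrite <- H; exact I end.
  - injection Heq; intros; subst. eapply pure_shift_not_value; apply EF.
  - injection Heq; intros; subst. eapply IH; eauto.
Qed.

Lemma pure_decomp_unique : forall E E' s s', pure E -> pure E' ->
  plugE E (Shift s) = plugE E' (Shift s') -> E = E' /\ s = s'.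
Proof.
  induction E as [| v E IH | E IH u |]; intros E' s s' PE PE' Heq; simpl in *;
    [| destruct PE as [Vv PE] | | contradiction];
    destruct E' as [| w E' | E' w | E']; simpl in *; try discriminate;
    injection Heq; intros; subst; try contradiction.
  - auto.
  - destruct (IH E' s s'); try tauto. subst; auto.
  - exfalso; eapply pure_shift_not_value; eauto.
  - exfalso; eapply pure_shift_not_value; apply PE'.
  - destruct (IH E' s s'); try tauto. subst; auto.
Qed.

Lemma contract_inner_hole : forall F r r' s s', evalctx F ->
  contract r s -> contract r' s' -> r = plugE F r' -> F = Hole.
Proof.
  intros F r r' s s' EF Hr Hr' Heq.
  destruct F as [| w F | F w | F]; auto; exfalso; simpl in *; subst r;
    inversion Hr; subst.
  - eapply contract_not_value; eauto.
  - eapply contract_not_value with (F := F); eauto.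
    match goal with H : Lam _ = _ |- _ => rewrite <- H; exact I end.
  - eapply plug_contract_neq_pure_shift; eauto.
  - eapply contract_not_value; eauto.
Qed.

Lemma contract_decomp_unique : forall F F' r r' s s', evalctx F -> evalctx F' ->
  contract r s -> contract r' s' -> plugE F r = plugE F' r' -> F = F' /\ r = r'.
Proof.
  induction F as [| v F IH | F IH u | F IH]; intros F' r r' s s' EF EF' Hr Hr' Heq.
  - simpl in Heq. pose proof (contract_inner_hole _ _ _ _ _ EF' Hr Hr' Heq) as ->; auto.
  - destruct F' as [| w F' | F' w | F']; simpl in Heq; try discriminate.
    + symmetry in Heq. discriminate (contract_inner_hole _ _ _ _ _ EF Hr' Hr Heq).
    + injection Heq; intros; subst. destruct (IH F' r r' s s'); try apply EF; try apply EF'; auto.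
      subst; auto.
    + injection Heq; intros; subst. exfalso. exact (contract_not_value F' r' s' Hr' (proj1 EF)).
  - destruct F' as [| w F' | F' w | F']; simpl in Heq; try discriminate.
    + symmetry in Heq. discriminate (contract_inner_hole _ _ _ _ _ EF Hr' Hr Heq).
    + injection Heq; intros; subst. exfalso. exact (contract_not_value F r s Hr (proj1 EF')).
    + injection Heq; intros; subst. destruct (IH F' r r' s s'); auto. subst; auto.
  - destruct F' as [| w F' | F' w | F']; simpl in Heq; try discriminate.
    + symmetry in Heq. discriminate (contract_inner_hole _ _ _ _ _ EF Hr' Hr Heq).
    + injection Heq; intros; subst. destruct (IH F' r r' s s'); auto. subst; auto.
Qed.

Lemma contract_det : forall r u u', contract r u -> contract r u' -> u = u'.
Proof.
  intros r u u' H H'; destruct H as [t v V | E t PE | v V]; inversion H'; subst; auto.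
  - match goal with Heq : plugE ?E' (Shift ?t') = _, PE' : pure ?E' |- _ =>
      destruct (pure_decomp_unique _ _ _ _ PE' PE Heq) as [-> ->] end; auto.
  - exfalso; eapply pure_shift_not_value; eauto.
  - exfalso; eapply pure_shift_not_value; eauto.
Qed.

Lemma step_det : forall t u u', step t u -> step t u' -> u = u'.
Proof.
  intros t u u' H H'.
  destruct (step_inv _ _ H) as [F [r [s [EF [Hr [-> ->]]]]]].
  destruct (step_inv _ _ H') as [F' [r' [s' [EF' [Hr' [Heq ->]]]]]].
  destruct (contract_decomp_unique _ _ _ _ _ _ EF EF' Hr Hr' Heq) as [-> ->].
  rewrite (contract_det _ _ _ Hr Hr'); auto.
Qed.

Lemma pure_shift_no_step : forall E s u, pure E -> ~ step (plugE E (Shift s)) u.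
Proof.
  intros E s u PE H. destruct (step_inv _ _ H) as [F [r [r' [EF [Hr [Heq _]]]]]].
  exact (plug_contract_neq_pure_shift _ _ _ _ _ PE EF Hr (eq_sym Heq)).
Qed.

Lemma closed_progress : forall t, closed t ->
  is_value t \/ (exists u, step t u) \/ (exists E s, pure E /\ t = plugE E (Shift s)).
Proof.
  unfold closed; induction t as [n | b _ | a IHa c IHc | b _ | b IHb]; intros H; simpl in H.
  - lia.
  - left; exact I.
  - destruct H as [Ha Hc].
    destruct (IHa Ha) as [Va | [[a' Sa] | [E [s [PE ->]]]]].
    + destruct a as [| b | | |]; try contradiction.
      destruct (IHc Hc) as [Vc | [[c' Sc] | [E [s [PE ->]]]]].
      * right; left. eexists. apply (step_contract Hole); simpl; auto using contract.
      * right; left. eexists. apply (step_ctx _ _ (AppR (Lam b) Hole) Sc); simpl; auto.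
      * right; right. exists (AppR (Lam b) E), s; simpl; auto.
    + right; left. eexists. apply (step_ctx _ _ (AppL Hole c) Sa); simpl; auto.
    + right; right. exists (AppL E c), s; simpl; auto.
  - right; right. exists Hole, b; simpl; auto.
  - right; left. destruct (IHb H) as [Vb | [[b' Sb] | [E [s [PE ->]]]]]; eexists.
    + apply (step_contract Hole); simpl; auto using contract.
    + apply (step_ctx _ _ (RstC Hole) Sb); simpl; auto.
    + apply (step_contract Hole); simpl; auto using contract.
Qed.

Lemma closed_normal_or_step : forall t, closed t -> normal_form t \/ exists u, step t u.
Proof.
  intros t Ht. destruct (closed_progress t Ht) as [V | [S | [E [s [PE ->]]]]].
  - left; left; exact V.
  - right; exact S.
  - left; right. split; [apply pure_shift_not_value | intros u; apply pure_shift_no_step; auto].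
Qed.

Lemma stuck_decomp : forall t, closed t -> stuck t ->
  exists E s, pure E /\ t = plugE E (Shift s).
Proof.
  intros t Ht [NV NS]. destruct (closed_progress t Ht) as [V | [[u S] | D]]; auto.
  - contradiction.
  - exfalso; exact (NS u S).
Qed.

(** * Term relations and environments *)

Definition rflip (R : rel) : rel := fun x y => R y x.

Definition tilde_incl (E E2 : rel) : Prop := forall x y, E x y -> tilde E2 x y.

Lemma tilde_open_mono : forall (R S : rel), (forall x y, R x y -> tilde_open S x y) ->
  forall a b, tilde_open R a b -> tilde_open S a b.
Proof. intros R S H a b T; induction T; eauto using tilde_open. Qed.

Lemma tilde_mono : forall (R S : rel), (forall x y, R x y -> tilde_open S x y) ->
  forall a b, tilde R a b -> tilde S a b.
Proof. intros R S H a b [T C]; split; eauto using tilde_open_mono. Qed.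

Lemma hat_mono : forall (R S : rel), (forall x y, R x y -> tilde_open S x y) ->
  forall F0 F1, hat R F0 F1 -> hat S F0 F1.
Proof. intros R S H F0 F1 T; induction T; econstructor; eauto using tilde_mono. Qed.

Lemma tilde_incl_open : forall E E2, tilde_incl E E2 -> forall x y, E x y -> tilde_open E2 x y.
Proof. intros E E2 H x y Hxy; exact (proj1 (H x y Hxy)). Qed.

Lemma tilde_open_refl : forall R t, tilde_open R t t.
Proof. intros R t; induction t; eauto using tilde_open. Qed.

Lemma tilde_open_plugC : forall R C t0 t1, tilde_open R t0 t1 ->
  tilde_open R (plugC C t0) (plugC C t1).
Proof. intros R C; induction C; intros; simpl; eauto using tilde_open, tilde_open_refl. Qed.

Lemma tilde_open_flip : forall R a b, tilde_open R a b -> tilde_open (rflip R) b a.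
Proof. intros R a b T; induction T; eauto using tilde_open. Qed.

Lemma tilde_flip : forall R a b, tilde R a b -> tilde (rflip R) b a.
Proof. intros R a b [T [C0 C1]]; split; auto using tilde_open_flip. Qed.

Lemma hat_flip : forall R F0 F1, hat R F0 F1 -> hat (rflip R) F1 F0.
Proof. intros R F0 F1 T; induction T; econstructor; eauto using tilde_flip. Qed.

Lemma environment_flip : forall R, environment R -> environment (rflip R).
Proof. intros R H a b Hab; destruct (H b a Hab) as [? [? [? | ?]]]; intuition. Qed.

Lemma hat_evalctx : forall R F0 F1, hat R F0 F1 -> evalctx F0 /\ evalctx F1.
Proof. intros R F0 F1 T; induction T; simpl; intuition. Qed.

Lemma hat_pure : forall R F0 F1, hat R F0 F1 -> pure F0 -> pure F1.
Proof. intros R F0 F1 T; induction T; simpl; intuition. Qed.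

Lemma hat_closed : forall R F0 F1, hat R F0 F1 -> closedE 0 F0 /\ closedE 0 F1.
Proof. intros R F0 F1 T; induction T; simpl; unfold tilde, closed in *; intuition. Qed.

Lemma hat_comp : forall R A0 A1 B0 B1, hat R A0 A1 -> hat R B0 B1 ->
  hat R (compE A0 B0) (compE A1 B1).
Proof. intros R A0 A1 B0 B1 T; induction T; intros; simpl; eauto using hat. Qed.

Lemma hat_plug_open : forall R F0 F1 t0 t1, hat R F0 F1 -> tilde_open R t0 t1 ->
  tilde_open R (plugE F0 t0) (plugE F1 t1).
Proof.
  intros R F0 F1 t0 t1 T; induction T; intros; simpl; unfold tilde in *;
    intuition eauto using tilde_open.
Qed.

Lemma hat_plug : forall R F0 F1 t0 t1, hat R F0 F1 -> tilde R t0 t1 ->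
  tilde R (plugE F0 t0) (plugE F1 t1).
Proof.
  intros R F0 F1 t0 t1 H [T [C0 C1]]. destruct (hat_closed _ _ _ H).
  split; [apply hat_plug_open; auto |]. unfold closed in *; rewrite !closed_plugE; auto.
Qed.

Lemma env_closed : forall R x y, environment R -> R x y -> closed x /\ closed y.
Proof. intros R x y H Hxy; destruct (H x y Hxy); tauto. Qed.

Lemma env_tilde : forall R x y, environment R -> R x y -> tilde R x y.
Proof. intros R x y H Hxy; destruct (env_closed _ _ _ H Hxy); split; auto using tilde_open. Qed.

Lemma env_no_step : forall R x y u, environment R -> R x y -> ~ step x u.
Proof.
  intros R x y u H Hxy; destruct (H x y Hxy) as [_ [_ [[V _] | [[_ S] _]]]];
    [apply value_no_step; auto | apply S].
Qed.

Lemma value_tilde : forall R a b, environment R -> tilde_open R a b -> is_value a -> is_value b.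
Proof.
  intros R a b HR T V; destruct T; simpl in *; auto; try contradiction.
  destruct (HR a b) as [_ [_ [[] | [[] _]]]]; auto; contradiction.
Qed.

Lemma value_tilde_r : forall R a b, environment R -> tilde_open R a b -> is_value b -> is_value a.
Proof. eauto using value_tilde, environment_flip, tilde_open_flip. Qed.

Lemma tilde_open_subst_at : forall R a b k v w, environment R -> tilde_open R a b ->
  closed v -> closed w -> tilde_open R v w ->
  tilde_open R (subst_at k a v) (subst_at k b w).
Proof.
  intros R a b k v w HR T; revert k; induction T; intros k Cv Cw Tvw; simpl;
    eauto using tilde_open.
  - destruct (env_closed _ _ _ HR H).
    rewrite !subst_at_closed; auto using tilde_open; eapply closed_at_mono; eauto; lia.
  - destruct (n =? k); [rewrite !liftn_closed; auto | destruct (k <? n)]; apply to_var.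
Qed.

Lemma tilde_subst : forall R a b v w, environment R -> tilde_open R a b ->
  closed_at 1 a -> closed_at 1 b -> tilde R v w -> tilde R (subst a v) (subst b w).
Proof.
  intros R a b v w HR T Ca Cb [Tvw [Cv Cw]].
  split; [apply tilde_open_subst_at | split; apply closed_subst]; auto.
Qed.

Lemma capture_tilde : forall R E0 E1, hat R E0 E1 -> tilde R (capture E0) (capture E1).
Proof.
  intros R E0 E1 H. destruct (hat_closed _ _ _ H) as [C0 C1].
  split; [| split; apply closed_capture; auto].
  unfold capture; rewrite !liftE_closed; auto.
  apply to_lam, to_reset, hat_plug_open; auto using tilde_open.
Qed.

Lemma tilde_App_inv : forall R a0 a1 b, tilde R (App a0 a1) b ->
  R (App a0 a1) b \/ exists b0 b1, b = App b0 b1 /\ tilde R a0 b0 /\ tilde R a1 b1.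
Proof.
  intros R a0 a1 b [T [[C0 C1] Cb]]; inversion T; subst; [left; auto | right].
  destruct Cb; do 2 eexists; repeat split; eauto.
Qed.

Lemma tilde_Reset_inv : forall R a b, tilde R (Reset a) b ->
  R (Reset a) b \/ exists b', b = Reset b' /\ tilde R a b'.
Proof.
  intros R a b [T [Ca Cb]]; inversion T; subst; [left; auto | right].
  eexists; repeat split; eauto.
Qed.

Lemma tilde_plug_step_inv : forall R F r r' b, environment R -> evalctx F -> step r r' ->
  tilde R (plugE F r) b -> exists G b', b = plugE G b' /\ hat R F G /\ tilde R r b'.
Proof.
  intros R F r r' b HR EF Sr; revert b.
  induction F as [| v F IH | F IH u | F IH]; intros b T; simpl in *.
  - exists Hole, b; auto using hat.
  - destruct (tilde_App_inv _ _ _ _ T) as [Rb | [b0 [b1 [-> [Tv TF]]]]].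
    + destruct (env_no_step _ _ _ _ HR Rb (step_ctx _ _ (AppR v F) Sr EF)).
    + destruct EF as [Vv EF]. destruct (IH EF b1 TF) as [G [b' [-> [HG Tr]]]].
      assert (Vb0 : is_value b0) by (eapply value_tilde; eauto; apply Tv).
      exists (AppR b0 G), b'; split; [reflexivity | split; [apply hat_appR |]]; auto.
  - destruct (tilde_App_inv _ _ _ _ T) as [Rb | [b0 [b1 [-> [TF Tu]]]]].
    + destruct (env_no_step _ _ _ _ HR Rb (step_ctx _ _ (AppL F u) Sr EF)).
    + destruct (IH EF b0 TF) as [G [b' [-> [HG Tr]]]].
      exists (AppL G b1), b'; split; [reflexivity | split; [apply hat_appL |]]; auto.
  - destruct (tilde_Reset_inv _ _ _ T) as [Rb | [b0 [-> TF]]].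
    + destruct (env_no_step _ _ _ _ HR Rb (step_ctx _ _ (RstC F) Sr EF)).
    + destruct (IH EF b0 TF) as [G [b' [-> [HG Tr]]]].
      exists (RstC G), b'; split; [reflexivity | split; [apply hat_rst |]]; auto.
Qed.

Lemma tilde_pure_shift_inv : forall R E0 s0 b, environment R -> pure E0 ->
  tilde R (plugE E0 (Shift s0)) b ->
  (exists E1 s1, b = plugE E1 (Shift s1) /\ pure E1 /\ hat R E0 E1 /\
     tilde_open R s0 s1 /\ closed_at 1 s0 /\ closed_at 1 s1) \/
  (exists E0c E0b E1c y, E0 = compE E0c E0b /\ b = plugE E1c y /\ pure E0c /\ pure E0b /\
     pure E1c /\ hat R E0c E1c /\ R (plugE E0b (Shift s0)) y).
Proof.
  intros R E0 s0 b HR PE; revert b.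
  induction E0 as [| v E0 IH | E0 IH u | E0 IH]; intros b T; simpl in *;
    try contradiction.
  - destruct T as [T [C0 C1]]. inversion T; subst.
    + right. exists Hole, Hole, Hole, b; simpl; repeat split; auto using hat.
    + left. eexists Hole, _; simpl; repeat split; eauto using hat.
  - destruct PE as [Vv PE].
    destruct (tilde_App_inv _ _ _ _ T) as [Rb | [b0 [b1 [-> [Tv TE]]]]].
    + right. exists Hole, (AppR v E0), Hole, b; simpl; repeat split; auto using hat.
    + assert (Vb0 : is_value b0) by (eapply value_tilde; eauto; apply Tv).
      destruct (IH PE b1 TE) as
        [[E1 [s1 [-> [P1 [HE [Ts [Cs0 Cs1]]]]]]] | [E0c [E0b [E1c [y [-> [-> [P0c [P0b [P1c [HE Ry]]]]]]]]]]].
      * left. exists (AppR b0 E1), s1; simpl; repeat split; auto using hat.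
      * right. exists (AppR v E0c), E0b, (AppR b0 E1c), y; simpl; repeat split; auto using hat.
  - destruct (tilde_App_inv _ _ _ _ T) as [Rb | [b0 [b1 [-> [TE Tu]]]]].
    + right. exists Hole, (AppL E0 u), Hole, b; simpl; repeat split; auto using hat.
    + destruct (IH PE b0 TE) as
        [[E1 [s1 [-> [P1 [HE [Ts [Cs0 Cs1]]]]]]] | [E0c [E0b [E1c [y [-> [-> [P0c [P0b [P1c [HE Ry]]]]]]]]]]].
      * left. exists (AppL E1 b1), s1; simpl; repeat split; auto using hat.
      * right. exists (AppL E0c u), E0b, (AppL E1c b1), y; simpl; repeat split; auto using hat.
Qed.

(** * Simulation up to context *)

Inductive ctx_rel (X : envrel) (E2 : rel) : term -> term -> Prop :=
| ctx_rel_tri : forall F0 F1 t0 t1, hat E2 F0 F1 -> X_tri X E2 t0 t1 ->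
    ctx_rel X E2 (plugE F0 t0) (plugE F1 t1)
| ctx_rel_tilde : forall a b, X_env X E2 -> tilde E2 a b -> ctx_rel X E2 a b.

Lemma ctx_rel_plug : forall X E2 F0 F1 a b, hat E2 F0 F1 -> ctx_rel X E2 a b ->
  ctx_rel X E2 (plugE F0 a) (plugE F1 b).
Proof.
  intros X E2 F0 F1 a b HF H; destruct H as [G0 G1 t0 t1 HG HT | a b HE T].
  - rewrite <- !plugE_comp. apply ctx_rel_tri; auto using hat_comp.
  - apply ctx_rel_tilde; auto using hat_plug.
Qed.

Section TildeSimulation.

Variable X : envrel.
Hypothesis HX : env_bisim X.
Variable E2 : rel.
Hypothesis HE2 : X_env X E2.

Let HR2 : environment E2 := proj1 (proj1 HX) E2 HE2.

Lemma tilde_beta_sim : forall b0 u v0 v1, is_value v0 ->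
  tilde E2 (Lam b0) u -> tilde E2 v0 v1 ->
  exists b1, u = Lam b1 /\ ctx_rel X E2 (subst b0 v0) (subst b1 v1).
Proof.
  intros b0 u v0 v1 V0 [T [C0 Cu]] Tv.
  assert (V1 : is_value v1) by (eapply value_tilde; eauto; apply Tv).
  inversion T as [? ? R0 | | ? b1 T0 | | |]; subst.
  - assert (Vu : is_value u) by (eapply value_tilde; eauto; exact I).
    destruct u as [| b1 | | |]; try contradiction.
    exists b1; split; auto.
    apply (ctx_rel_tri _ _ Hole Hole); [constructor |].
    apply (proj1 (proj2 (proj2 HX) E2 HE2)); auto.
  - exists b1; split; auto. apply ctx_rel_tilde; auto using tilde_subst.
Qed.

Lemma tilde_shift_sim : forall E0 s0 E0' E1' u, pure E0 -> pure E0' -> hat E2 E0' E1' ->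
  tilde E2 (plugE E0 (Shift s0)) u ->
  exists E1 s1, pure E1 /\ u = plugE E1 (Shift s1) /\
    ctx_rel X E2 (Reset (subst s0 (capture (compE E0' E0))))
                 (Reset (subst s1 (capture (compE E1' E1)))).
Proof.
  intros E0 s0 E0' E1' u P0 P0' HE' T.
  pose proof (hat_pure _ _ _ HE' P0') as P1'.
  destruct (tilde_pure_shift_inv _ _ _ _ HR2 P0 T) as
    [[E1 [s1 [-> [P1 [HE [Ts [Cs0 Cs1]]]]]]]
    | [E0c [E0b [E1c [y [-> [-> [P0c [P0b [P1c [HEc Ry]]]]]]]]]]].
  - exists E1, s1; repeat split; auto.
    apply ctx_rel_tilde; auto.
    apply (hat_plug _ (RstC Hole) (RstC Hole)); [repeat constructor |].
    apply tilde_subst; auto using capture_tilde, hat_comp.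
  - destruct (HR2 _ _ Ry) as [_ [Cy [[V _] | [_ Sy]]]].
    { destruct (pure_shift_not_value _ _ V). }
    destruct (stuck_decomp y Cy Sy) as [E1b [s1 [P1b ->]]].
    exists (compE E1c E1b), s1; repeat split; auto using pure_comp.
    { rewrite plugE_comp; auto. }
    rewrite !compE_assoc, !capture_comp.
    apply (ctx_rel_tri _ _ Hole Hole); [constructor |].
    apply (proj2 (proj2 (proj2 HX) E2 HE2)); auto using pure_comp, hat_comp.
Qed.

Lemma contract_sim : forall r r' b, contract r r' -> tilde E2 r b ->
  exists b', contract b b' /\ ctx_rel X E2 r' b'.
Proof.
  intros r r' b Hr T.
  assert (NR : ~ E2 r b) by (intros Rb; exact (env_no_step _ _ _ _ HR2 Rb (step_contract Hole _ _ I Hr))).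
  destruct Hr as [t v V | E t PE | v V].
  - destruct (tilde_App_inv _ _ _ _ T) as [Rb | [bL [bV [-> [TL TV]]]]]; [contradiction |].
    destruct (tilde_beta_sim _ _ _ _ V TL TV) as [b1 [-> HS]].
    exists (subst b1 bV); split; auto.
    constructor. eapply value_tilde; eauto; apply TV.
  - destruct (tilde_Reset_inv _ _ _ T) as [Rb | [u [-> TE]]]; [contradiction |].
    destruct (tilde_shift_sim E t Hole Hole u PE I (hat_hole _) TE) as [E1 [s1 [P1 [-> HS]]]].
    exists (Reset (subst s1 (capture E1))); split; auto using contract.
  - destruct (tilde_Reset_inv _ _ _ T) as [Rb | [u [-> Tv]]]; [contradiction |].
    exists u; split; [constructor | apply ctx_rel_tilde; auto].
    eapply value_tilde; eauto; apply Tv.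
Qed.

Lemma tilde_step_sim : forall a a' b, step a a' -> tilde E2 a b ->
  exists b', step b b' /\ ctx_rel X E2 a' b'.
Proof.
  intros a a' b Sa T. destruct (step_inv _ _ Sa) as [F [r [r' [EF [Hr [-> ->]]]]]].
  destruct (tilde_plug_step_inv _ _ _ _ _ HR2 EF (step_contract Hole _ _ I Hr) T)
    as [G [b' [-> [HG Tr]]]].
  destruct (contract_sim _ _ _ Hr Tr) as [b'' [Hb HS]].
  exists (plugE G b''); split.
  - apply step_contract; auto. exact (proj2 (hat_evalctx _ _ _ HG)).
  - apply ctx_rel_plug; auto.
Qed.

End TildeSimulation.

(** * Symmetry *)

Definition flip_envrel (X : envrel) : envrel :=
  {| X_env := fun E => X_env X (rflip E); X_tri := fun E a b => X_tri X (rflip E) b a |}.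

Lemma flip_add_pair : forall E a b, rflip (add_pair E a b) = add_pair (rflip E) b a.
Proof.
  intros; apply functional_extensionality; intro x; apply functional_extensionality; intro y;
    unfold rflip, add_pair; apply propositional_extensionality; tauto.
Qed.

Lemma flip_bisim : forall X, env_bisim X -> env_bisim (flip_envrel X).
Proof.
  intros X [[W1 W2] [C1 C2]]. split; [split | split]; simpl.
  - intros E H. exact (environment_flip _ (W1 _ H)).
  - intros E t0 t1 H. destruct (W2 _ _ _ H) as [HE [? ?]].
    split; [exact (environment_flip _ HE) | auto].
  - intros E t0 t1 H. destruct (C1 _ _ _ H) as [L1 [L2 [L3 [R1 [R2 R3]]]]].
    repeat split; auto; intros V;
      [ destruct (R2 V) as [w Hw] | destruct (R3 V) as [w Hw]
      | destruct (L2 V) as [w Hw] | destruct (L3 V) as [w Hw] ];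
      exists w; rewrite flip_add_pair; exact Hw.
  - intros E HE. destruct (C2 _ HE) as [Ca Cb]. split.
    + intros b0 b1 v0 v1 HL V0 V1 Tv. apply Ca; auto using tilde_flip.
    + intros E0 E1 s0 s1 E0' E1' P0 P1 HS P0' P1' HH. apply Cb; auto using hat_flip.
Qed.

Definition ctx_env (X : envrel) (E : rel) : Prop :=
  environment E /\ exists E2, X_env X E2 /\ tilde_incl E E2.

Definition ctx_tri (X : envrel) (E : rel) (a b : term) : Prop :=
  environment E /\ exists E2, tilde_incl E E2 /\ ctx_rel X E2 a b.

Definition ctx_closure (X : envrel) : envrel := {| X_env := ctx_env X; X_tri := ctx_tri X |}.

Definition sim_left (Y : envrel) (E : rel) (a b : term) : Prop :=
  (forall a', step a a' -> exists b', steps b b' /\ X_tri Y E a' b') /\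
  (is_value a -> exists v1, steps b v1 /\ is_value v1 /\ X_env Y (add_pair E a v1)) /\
  (stuck a -> exists b', steps b b' /\ stuck b' /\ X_env Y (add_pair E a b')).

Lemma sim_left_steps : forall Y E a b b', steps b b' -> sim_left Y E a b' -> sim_left Y E a b.
Proof.
  intros Y E a b b' S [A1 [A2 A3]]; repeat split.
  - intros a' H. destruct (A1 a' H) as [c [? ?]]. exists c; eauto using steps_trans.
  - intros H. destruct (A2 H) as [c [? ?]]. exists c; eauto using steps_trans.
  - intros H. destruct (A3 H) as [c [? ?]]. exists c; eauto using steps_trans.
Qed.

Lemma environment_add_pair : forall E a b, environment E -> closed a -> closed b ->
  (is_value a /\ is_value b) \/ (stuck a /\ stuck b) -> environment (add_pair E a b).
Proof. intros E a b HE Ca Cb Hab x y [H | [-> ->]]; auto. Qed.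

Lemma tilde_incl_add_pair : forall E E2 a b, tilde_incl E E2 -> tilde E2 a b ->
  tilde_incl (add_pair E a b) E2.
Proof. intros E E2 a b H T x y [Hxy | [-> ->]]; auto. Qed.

Lemma tilde_incl_trans : forall E E2 E3, tilde_incl E E2 -> (forall x y, E2 x y -> E3 x y) ->
  environment E3 -> tilde_incl E E3.
Proof.
  intros E E2 E3 H12 H23 HE3 x y Hxy.
  apply (tilde_mono E2); auto. intros u w Huw. apply to_R; auto.
Qed.

Lemma ctx_rel_closed : forall X E2 a b, env_bisim X -> ctx_rel X E2 a b -> closed a /\ closed b.
Proof.
  intros X E2 a b [[_ W2] _] H; destruct H as [F0 F1 t0 t1 HF HT | a b _ [_ C]]; auto.
  destruct (W2 _ _ _ HT) as [_ [C0 C1]]. destruct (hat_closed _ _ _ HF).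
  unfold closed; rewrite !closed_plugE; auto.
Qed.

Section Closure.

Variable X : envrel.
Hypothesis HX : env_bisim X.

Lemma sim_left_tilde : forall E E2 a b, X_env X E2 -> environment E -> tilde_incl E E2 ->
  tilde E2 a b -> sim_left (ctx_closure X) E a b.
Proof.
  intros E E2 a b HE2 HE Hincl T.
  pose proof (proj1 (proj1 HX) E2 HE2) as HR2.
  pose proof T as [T' [Ca Cb]].
  repeat split.
  - intros a' Sa. destruct (tilde_step_sim X HX E2 HE2 a a' b Sa T) as [b' [Sb HS]].
    exists b'; split; [eauto using steps | split; [exact HE | eauto]].
  - intros Va. assert (Vb : is_value b) by (eapply value_tilde; eauto).
    exists b; split; [constructor | split; [exact Vb | split]].
    + apply environment_add_pair; auto.
    + exists E2; split; auto using tilde_incl_add_pair.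
  - intros Sa. pose proof Sa as [NVa NSa].
    assert (Sb : stuck b).
    { split.
      - intros Vb. apply NVa. eapply value_tilde_r; eauto.
      - intros b' Sb.
        destruct (tilde_step_sim _ (flip_bisim X HX) (rflip E2) HE2 b b' a Sb (tilde_flip _ _ _ T))
          as [a' [Sa' _]].
        exact (NSa a' Sa'). }
    exists b; split; [constructor | split; [exact Sb | split]].
    + apply environment_add_pair; auto.
    + exists E2; split; auto using tilde_incl_add_pair.
Qed.

Lemma sim_left_ctx_rel : forall E E2 a b, environment E -> tilde_incl E E2 ->
  ctx_rel X E2 a b -> sim_left (ctx_closure X) E a b.
Proof.
  intros E E2 a b HE Hincl H.
  destruct H as [F0 F1 t0 t1 HF HT | a b HE2 T]; [| eapply sim_left_tilde; eauto].
  pose proof HX as [[W1 W2] [C1 _]].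
  destruct (W2 _ _ _ HT) as [HR2 [Ct0 Ct1]].
  destruct (hat_evalctx _ _ _ HF) as [EF0 EF1].
  destruct (C1 _ _ _ HT) as [A1 [A2 [A3 _]]].
  destruct (closed_normal_or_step t0 Ct0) as [N | [t0' St0]].
  - (* The normal form [t0] and its partner join the environment, whose congruence closure
       then relates the whole terms. *)
    assert (exists t1s, steps t1 t1s /\ X_env X (add_pair E2 t0 t1s)) as [t1s [St HE3]].
    { destruct N as [V | S]; [destruct (A2 V) as [w [? [? ?]]] | destruct (A3 S) as [w [? [? ?]]]];
        eauto. }
    pose proof (W1 _ HE3) as HR3.
    assert (Hsub : forall x y, E2 x y -> add_pair E2 t0 t1s x y) by (left; auto).
    apply sim_left_steps with (plugE F1 t1s); [apply steps_ctx; auto |].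
    apply sim_left_tilde with (add_pair E2 t0 t1s); auto.
    + apply tilde_incl_trans with E2; auto.
    + apply hat_plug.
      * apply hat_mono with E2; auto using tilde_open.
      * apply env_tilde; [exact HR3 | right; auto].
  - pose proof (step_ctx _ _ F0 St0 EF0) as SF.
    repeat split.
    + intros a' Sa. rewrite (step_det _ _ _ Sa SF).
      destruct (A1 _ St0) as [t1' [St1 HT']].
      exists (plugE F1 t1'); split; [apply steps_ctx; auto |].
      split; [exact HE | exists E2; split; [exact Hincl | apply ctx_rel_tri; auto]].
    + intros V. destruct (plugE_value _ _ V) as [-> V0]. destruct (value_no_step _ _ V0 St0).
    + intros [_ S]. destruct (S _ SF).
Qed.

Lemma ctx_env_beta : forall E b0 b1 v0 v1, ctx_env X E -> E (Lam b0) (Lam b1) ->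
  is_value v0 -> tilde E v0 v1 -> ctx_tri X E (subst b0 v0) (subst b1 v1).
Proof.
  intros E b0 b1 v0 v1 [HE [E2 [HE2 Hincl]]] HL V0 Tv.
  split; [exact HE | exists E2; split; [exact Hincl |]].
  destruct (tilde_beta_sim X HX E2 HE2 b0 (Lam b1) v0 v1 V0 (Hincl _ _ HL)
              (tilde_mono _ _ (tilde_incl_open _ _ Hincl) _ _ Tv)) as [b1' [Heq HS]].
  injection Heq as ->; exact HS.
Qed.

Lemma ctx_env_shift : forall E E0 E1 s0 s1 E0' E1', ctx_env X E -> pure E0 -> pure E1 ->
  E (plugE E0 (Shift s0)) (plugE E1 (Shift s1)) -> pure E0' -> hat E E0' E1' ->
  ctx_tri X E
    (Reset (subst s0 (Lam (Reset (plugE (liftE 0 E0') (plugE (liftE 0 E0) (Var 0)))))))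
    (Reset (subst s1 (Lam (Reset (plugE (liftE 0 E1') (plugE (liftE 0 E1) (Var 0))))))).
Proof.
  intros E E0 E1 s0 s1 E0' E1' [HE [E2 [HE2 Hincl]]] P0 P1 HS P0' HH.
  split; [exact HE | exists E2; split; [exact Hincl |]].
  rewrite <- !capture_comp.
  destruct (tilde_shift_sim X HX E2 HE2 E0 s0 E0' E1' _ P0 P0'
              (hat_mono _ _ (tilde_incl_open _ _ Hincl) _ _ HH) (Hincl _ _ HS))
    as [E1x [s1x [P1x [Heq HSim]]]].
  destruct (pure_decomp_unique _ _ _ _ P1 P1x Heq) as [-> ->]; exact HSim.
Qed.

End Closure.

Lemma tilde_incl_flip : forall E E2, tilde_incl E E2 -> tilde_incl (rflip E) (rflip E2).
Proof. intros E E2 H x y Hxy; apply tilde_flip, H, Hxy. Qed.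

Lemma ctx_rel_flip : forall X E2 a b, ctx_rel X E2 a b -> ctx_rel (flip_envrel X) (rflip E2) b a.
Proof.
  intros X E2 a b H; destruct H as [F0 F1 t0 t1 HF HT | a b HE T].
  - apply ctx_rel_tri; auto using hat_flip.
  - apply ctx_rel_tilde; auto using tilde_flip.
Qed.

Lemma ctx_rel_unflip : forall X E2 a b,
  ctx_rel (flip_envrel X) (rflip E2) b a -> ctx_rel X E2 a b.
Proof.
  intros X E2 a b H; destruct H as [F1 F0 t1 t0 HF HT | b a HE T].
  - apply ctx_rel_tri; [exact (hat_flip _ _ _ HF) | exact HT].
  - apply ctx_rel_tilde; [exact HE | exact (tilde_flip _ _ _ T)].
Qed.

Lemma ctx_tri_flip : forall X E a b, ctx_tri X E a b -> ctx_tri (flip_envrel X) (rflip E) b a.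
Proof.
  intros X E a b [HE [E2 [Hincl H]]].
  split; [apply environment_flip; auto |].
  exists (rflip E2); auto using tilde_incl_flip, ctx_rel_flip.
Qed.

Lemma ctx_tri_unflip : forall X E a b, ctx_tri (flip_envrel X) (rflip E) b a -> ctx_tri X E a b.
Proof.
  intros X E a b [HE [E2 [Hincl H]]].
  split; [exact (environment_flip _ HE) |].
  exists (rflip E2); split; [exact (tilde_incl_flip _ _ Hincl) | apply ctx_rel_unflip; exact H].
Qed.

Lemma ctx_env_unflip : forall X E, ctx_env (flip_envrel X) (rflip E) -> ctx_env X E.
Proof.
  intros X E [HE [E2 [HE2 Hincl]]].
  split; [exact (environment_flip _ HE) |].
  exists (rflip E2); split; [exact HE2 | exact (tilde_incl_flip _ _ Hincl)].
Qed.

Lemma ctx_closure_bisim : forall X, env_bisim X -> env_bisim (ctx_closure X).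
Proof.
  intros X HX. split; [split | split]; simpl.
  - intros E [HE _]; exact HE.
  - intros E a b [HE [E2 [_ H]]]. split; [exact HE | exact (ctx_rel_closed _ _ _ _ HX H)].
  - intros E a b HT. pose proof HT as [HE [E2 [Hincl H]]].
    destruct (sim_left_ctx_rel X HX E E2 a b HE Hincl H) as [A1 [A2 A3]].
    destruct (ctx_tri_flip _ _ _ _ HT) as [HE' [E2' [Hincl' H']]].
    destruct (sim_left_ctx_rel _ (flip_bisim X HX) _ E2' b a HE' Hincl' H') as [B1 [B2 B3]].
    repeat split; auto.
    + intros b' Sb. destruct (B1 b' Sb) as [a' [Sa HT']].
      exists a'; split; [exact Sa | apply ctx_tri_unflip; exact HT'].
    + intros Vb. destruct (B2 Vb) as [a' [Sa [Va HE3]]].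
      exists a'; split; [exact Sa | split; [exact Va |]].
      apply ctx_env_unflip. rewrite flip_add_pair. exact HE3.
    + intros Sb. destruct (B3 Sb) as [a' [Sa [Sa' HE3]]].
      exists a'; split; [exact Sa | split; [exact Sa' |]].
      apply ctx_env_unflip. rewrite flip_add_pair. exact HE3.
  - intros E HE. split; intros; [apply ctx_env_beta | apply ctx_env_shift]; auto.
Qed.

Theorem lemma7 :
  forall (E : rel) (t0 t1 : term),
    environment E ->
    closed t0 -> closed t1 -> normal_form t0 -> normal_form t1 ->
    bisimilar E t0 t1 ->
    forall C : ctx,
      closed (plugC C t0) -> closed (plugC C t1) ->
      bisimilar E (plugC C t0) (plugC C t1).
Proof.
  intros E t0 t1 HE _ _ N0 N1 [X [HX HT]] C HC0 HC1.
  pose proof HX as [[W1 _] [Cl _]].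
  destruct (Cl _ _ _ HT) as [_ [A2 [A3 _]]].
  assert (HE1 : X_env X (add_pair E t0 t1)).
  { destruct N0 as [V0 | S0]; [destruct (A2 V0) as [w [St [_ Hw]]] | destruct (A3 S0) as [w [St [_ Hw]]]];
      rewrite (normal_steps _ _ N1 St) in Hw; exact Hw. }
  pose proof (W1 _ HE1) as HR1.
  exists (ctx_closure X); split; [apply ctx_closure_bisim; exact HX |].
  split; [exact HE | exists (add_pair E t0 t1); split].
  - apply tilde_incl_trans with E; [intros x y Hxy; apply env_tilde | left |]; auto.
  - apply ctx_rel_tilde; [exact HE1 |].
    split; [apply tilde_open_plugC, to_R; right; auto | auto].
Qed.
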